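(* Let $P$ be an $n\times n$ stochastic SIA matrix satisfying the pattern-symmetry condition $p_{ij}>0\Leftrightarrow p_{ji}>0$ for all $i\neq j$. Then (1) $P\in\mathcal S_2$, i.e., the SIA index of $P$ is at most $2$; and (2) if moreover $P$ is symmetric, then $P\in\mathcal S_1$, i.e., $P$ is a Sarymsakov matrix.
   Context: Let $\mathcal N=\{1,\ldots,n\}$. A matrix is stochastic if it is entrywise nonnegative with row sums $1$. For stochastic $P$ and $\mathcal A\subseteq\mathcal N$, $F_P(\mathcal A)=\{j:\ p_{ij}>0\text{ for some } i\in\mathcal A\}$, $F_P^1=F_P$, $F_P^k(\mathcal A)=F_P(F_P^{k-1}(\mathcal A))$. $P$ is SIA if $\lim_{m\to\infty}P^m=\mathbf 1c^T$ for some nonnegative $c$ with entries summing to $1$. For an SIA matrix $P$ and each unordered pair of disjoint nonempty sets $\mathcal A,\tilde{\mathcal A}\subseteq\mathcal N$, let $s(\mathcal A,\tilde{\mathcal A})$ be the smallest integer $k\ge1$ such that either (i) $F_P^k(\mathcal A)\cap F_P^k(\tilde{\mathcal A})\ne\emptyset$, or (ii) $F_P^k(\mathcal A)\cap F_P^k(\tilde{\mathcal A})=\emptyset$ and $|F_P^k(\mathcal A)\cup F_P^k(\tilde{\mathcal A})|>|\mathcal A\cup\tilde{\mathcal A}|$. The SIA index of $P$ is the maximum of $s(\mathcal A,\tilde{\mathcal A})$ over all such pairs. $\mathcal S_k$ is the set of $n\times n$ SIA matrices with SIA index at most $k$; $\mathcal S_1$ is the set of stochastic Sarymsakov matrices.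 *)

(* Matrices over an archimedean real field R (all such fields
   are ordered subfields of the reals, so entrywise convergence is the usual one). *)
From HB Require Import structures.
From mathcomp Require Import all_boot all_order all_algebra.
Set Implicit Arguments. Unset Strict Implicit. Unset Printing Implicit Defensive.
Import Order.TTheory GRing.Theory Num.Theory.
Local Open Scope ring_scope.

Section Defs.
Variable R : archiRealFieldType.
Variable n : nat.
Implicit Types (P : 'M[R]_n) (A B : {set 'I_n}).

Definition stochastic P : Prop :=
  (forall i j, 0 <= P i j) /\ (forall i, \sum_(j < n) P i j = 1).

Definition mxpow P (m : nat) : 'M[R]_n := iter m (mulmx P) 1%:M.

Definition SIA P : Prop :=
  exists c : 'I_n -> R,
    [/\ forall j, 0 <= c j, \sum_(j < n) c j = 1 &
        forall eps : R, 0 < eps -> exists N : nat, forall m : nat, (N <= m)%N ->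
          forall i j, `| mxpow P m i j - c j | < eps].

Definition F P A : {set 'I_n} := [set j | [exists i in A, 0 < P i j]].

Definition Fk P (k : nat) A : {set 'I_n} := iter k (F P) A.

Definition s_cond P A B (k : nat) : bool :=
  (Fk P k A :&: Fk P k B != set0) ||
  ((Fk P k A :&: Fk P k B == set0) && (#|A :|: B| < #|Fk P k A :|: Fk P k B|)%N).

(* P \in S_k : P is SIA and its SIA index is at most k, i.e. for every pair of
   disjoint nonempty sets the smallest k' >= 1 satisfying s_cond is <= k
   (equivalently, some k' in [1, k] satisfies s_cond). *)
Definition in_S (k : nat) P : Prop :=
  SIA P /\
  forall A B, A != set0 -> B != set0 -> [disjoint A & B] ->
    exists2 k' : nat, (1 <= k' <= k)%N & s_cond P A B k'.

Definition pattern_symmetric P : Prop :=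
  forall i j : 'I_n, i != j -> (0 < P i j) = (0 < P j i).

End Defs.

From HB Require Import structures.
From mathcomp Require Import all_boot all_order all_algebra.
From mathcomp Require Import lra zify.
Set Implicit Arguments. Unset Strict Implicit. Unset Printing Implicit Defensive.
Import Order.TTheory GRing.Theory Num.Theory.
Local Open Scope ring_scope.

(* Suppose a pair of disjoint nonempty sets A, B violates the defining condition
   at step k, where #|F^k A| >= #|A| and #|F^k B| >= #|B|.  Then the images stay
   disjoint and of the same sizes.  Under pattern symmetry A is contained in F(F A),
   so for k = 2 this forces F(F A) = A and F(F B) = B; for symmetric P the column
   sums are 1, which gives #|F A| >= #|A| with equality only if F(F A) = A, so the
   case k = 1 ends the same way.  But if F(F A) = A then F^(2m) A = A, while by SIA
   some column j of P^m is entrywise positive for m large, putting j into every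
   F^m A; hence j would lie in both A and B. *)

Lemma exists_pos_of_sum1 (R : numDomainType) (n : nat) (f : 'I_n -> R) :
  (forall j, 0 <= f j) -> \sum_(j < n) f j = 1 -> exists j, 0 < f j.
Proof.
move=> f_ge0 f_sum1; case: (pickP (fun j => 0 < f j)) => [j|f_le0]; first by exists j.
suff : \sum_(j < n) f j <= 0 by rewrite f_sum1 ler10.
by apply: sumr_le0 => j _; move: (f_le0 j); rewrite /= lt0r f_ge0 andbT => /negbFE/eqP->.
Qed.

Lemma Fk_double_id (R : archiRealFieldType) (n : nat) (P : 'M[R]_n)
    (A : {set 'I_n}) (m : nat) :
  F P (F P A) = A -> Fk P m.*2 A = A.
Proof.
move=> FFA; elim: m => [//|m IHm].
by rewrite doubleS /Fk /= -/(Fk P m.*2 A) IHm FFA.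
Qed.

Lemma card_squeeze (n : nat) (A B X Y : {set 'I_n}) :
  (#|A| <= #|X|)%N -> (#|B| <= #|Y|)%N -> [disjoint A & B] -> X :&: Y = set0 ->
  (#|X :|: Y| <= #|A :|: B|)%N -> #|X| = #|A| /\ #|Y| = #|B|.
Proof.
move=> leAX leBY /disjoint_setI0 AB0 XY0.
by rewrite !cardsU AB0 XY0 !cards0 !subn0; lia.
Qed.

Lemma s_condN_card (R : archiRealFieldType) (n : nat) (P : 'M[R]_n)
    (A B : {set 'I_n}) (k : nat) :
  [disjoint A & B] -> (#|A| <= #|Fk P k A|)%N -> (#|B| <= #|Fk P k B|)%N ->
  ~~ s_cond P A B k -> #|Fk P k A| = #|A| /\ #|Fk P k B| = #|B|.
Proof.
move=> dAB leA leB; rewrite /s_cond negb_or negbK => /andP[/eqP meet0].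
by rewrite meet0 eqxx /= -leqNgt; apply: card_squeeze.
Qed.

Section NonnegativeMatrix.
Variables (R : archiRealFieldType) (n : nat) (P : 'M[R]_n).
Hypothesis P_ge0 : forall i j, 0 <= P i j.

Lemma mxpow_ge0 (m : nat) i j : 0 <= mxpow P m i j.
Proof.
elim: m i j => [|m IHm] i j; first by rewrite /mxpow /= mxE ler0n.
by rewrite /mxpow /= mxE; apply: sumr_ge0 => k _; rewrite mulr_ge0.
Qed.

(* A positive entry of P^m is a walk of length m in the graph of P. *)
Lemma mxpow_pos_Fk (m : nat) (A : {set 'I_n}) i j :
  i \in A -> 0 < mxpow P m i j -> j \in Fk P m A.
Proof.
elim: m A i => [|m IHm] A i iA.
  by rewrite /mxpow /= mxE; case: eqVneq => [<- //|]; rewrite ltxx.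
rewrite /Fk iterSr -/(Fk P m (F P A)) /mxpow /= mxE => sum_gt0.
have [k Pik_gt0] : exists k, 0 < P i k * mxpow P m k j.
  case: (pickP (fun k => 0 < P i k * mxpow P m k j)) => [k|terms_le0]; first by exists k.
  suff : \sum_k P i k * mxpow P m k j <= 0 by rewrite leNgt sum_gt0.
  by apply: sumr_le0 => k _; rewrite leNgt terms_le0.
have [Pik Pkj] : 0 < P i k /\ 0 < mxpow P m k j.
  by move: Pik_gt0; rewrite mulr_ge0_gt0 ?P_ge0 ?mxpow_ge0 // => /andP.
apply: (IHm _ k) => //.
by rewrite inE; apply/existsP; exists i; rewrite iA.
Qed.

Lemma SIA_pos_column : SIA P ->
  exists j N, forall m, (N <= m)%N -> forall i, 0 < mxpow P m i j.
Proof.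
move=> [c [c_ge0 c_sum1 c_lim]].
have [j cj_gt0] := exists_pos_of_sum1 c_ge0 c_sum1.
have [N limN] := c_lim _ cj_gt0; exists j, N => m Nm i.
by have := limN m Nm i j; rewrite ltr_norml => /andP[+ _]; lra.
Qed.

Lemma SIA_FF_fixed_meet (A B : {set 'I_n}) : SIA P ->
  A != set0 -> B != set0 -> F P (F P A) = A -> F P (F P B) = B ->
  ~~ [disjoint A & B].
Proof.
move=> sia /set0Pn[a aA] /set0Pn[b bB] FFA FFB.
have [j [N col_pos]] := SIA_pos_column sia.
have NN2 : (N <= N.*2)%N by rewrite -addnn leq_addr.
have jA : j \in A by rewrite -(Fk_double_id N FFA); exact: mxpow_pos_Fk aA (col_pos _ NN2 a).
have jB : j \in B by rewrite -(Fk_double_id N FFB); exact: mxpow_pos_Fk bB (col_pos _ NN2 b).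
by apply/pred0Pn; exists j; rewrite /= jA.
Qed.

End NonnegativeMatrix.

Section StochasticMatrix.
Variables (R : archiRealFieldType) (n : nat) (P : 'M[R]_n).
Hypothesis P_stoch : stochastic P.

Lemma subset_FF (A : {set 'I_n}) : pattern_symmetric P -> A \subset F P (F P A).
Proof.
have [P_ge0 P_sum1] := P_stoch.
move=> psym; apply/subsetP => i iA.
have [j Pij_gt0] := exists_pos_of_sum1 (P_ge0 i) (P_sum1 i).
rewrite inE; apply/existsP; exists j; apply/andP; split.
  by rewrite inE; apply/existsP; exists i; rewrite iA.
by case: (eqVneq i j) Pij_gt0 => [<- //|ij]; rewrite -(psym _ _ ij).
Qed.

Section Symmetric.
Hypothesis P_sym : P^T = P.

Lemma pattern_symmetric_sym : pattern_symmetric P.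
Proof. by move=> i j _; rewrite -{1}P_sym mxE. Qed.

(* Count the total mass sent into F A along the rows: the rows of A put all
   their mass there, and every column sums to 1. *)
Lemma card_F_mass (A : {set 'I_n}) :
  (#|F P A|)%:R = (#|A|)%:R + \sum_(i | i \notin A) \sum_(j in F P A) P i j :> R.
Proof.
have [P_ge0 P_sum1] := P_stoch.
have col_sum1 j : \sum_i P i j = 1.
  by rewrite -(P_sum1 j); apply: eq_bigr => i _; rewrite -{1}P_sym mxE.
have -> : (#|F P A|)%:R = \sum_i \sum_(j in F P A) P i j :> R.
  by rewrite exchange_big /= -sumr_const; apply: eq_bigr => j _; rewrite col_sum1.
rewrite (bigID (mem A)) /=; congr (_ + _).
rewrite -sumr_const; apply: eq_bigr => i iA; rewrite -(P_sum1 i).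
rewrite [RHS](bigID (mem (F P A))) /= [X in _ = _ + X]big1 ?addr0 // => j jF.
apply/eqP; rewrite eq_le P_ge0 andbT leNgt; apply: contra jF => Pij_gt0.
by rewrite inE; apply/existsP; exists i; rewrite iA.
Qed.

Lemma card_le_F (A : {set 'I_n}) : (#|A| <= #|F P A|)%N.
Proof.
rewrite -(ler_nat R) card_F_mass lerDl.
by apply: sumr_ge0 => i _; apply: sumr_ge0 => j _; apply: P_stoch.1.
Qed.

Lemma card_F_eq_FF (A : {set 'I_n}) : #|F P A| = #|A| -> F P (F P A) = A.
Proof.
have [P_ge0 _] := P_stoch.
move=> cardFA; apply/eqP; rewrite eqEsubset (subset_FF A pattern_symmetric_sym) andbT.
apply/subsetP => x; rewrite inE => /existsP[j /andP[jF Pjx_gt0]].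
apply/negPn/negP => xA; move: (card_F_mass A); rewrite cardFA.
rewrite -{1}[_%:R]addr0 => /addrI/esym/eqP; rewrite psumr_eq0 => [/allP/(_ x)|i _]; last first.
  by apply: sumr_ge0 => k _.
rewrite mem_index_enum xA psumr_eq0 => [/(_ isT)/allP/(_ j)|k _ //].
by rewrite mem_index_enum jF -{1}P_sym mxE gt_eqF // => /(_ isT).
Qed.

End Symmetric.
End StochasticMatrix.

Theorem proposition2 (R : archiRealFieldType) (n : nat) (P : 'M[R]_n) :
  stochastic P -> SIA P -> pattern_symmetric P ->
  in_S 2 P /\ (P^T = P -> in_S 1 P).
Proof.
move=> P_stoch sia psym; have P_ge0 := P_stoch.1.
split=> [|P_sym]; split=> // A B nA nB dAB.
  exists 2%N => //; apply/negPn/negP => no_cond.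
  have FF_sub (C : {set 'I_n}) : C \subset Fk P 2 C by apply: subset_FF.
  have [cA cB] := s_condN_card dAB (subset_leq_card (FF_sub A))
    (subset_leq_card (FF_sub B)) no_cond.
  have FFA : F P (F P A) = A by apply/eqP; rewrite eq_sym eqEcard FF_sub cA /=.
  have FFB : F P (F P B) = B by apply/eqP; rewrite eq_sym eqEcard FF_sub cB /=.
  by move: dAB; apply/negP; apply: SIA_FF_fixed_meet.
exists 1%N => //; apply/negPn/negP => no_cond.
have [cA cB] := @s_condN_card _ _ P A B 1 dAB (card_le_F P_stoch P_sym A)
  (card_le_F P_stoch P_sym B) no_cond.
by move: dAB; apply/negP; apply: SIA_FF_fixed_meet => //; apply: card_F_eq_FF.
Qed.
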